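(* Let $\langle\mathcal{X},\mathsf{cap}\rangle$ be a $\textsf{VCh}$ instance with $\mathcal{X}=\langle\mathsf{S},\mathsf{po}\rangle$, and let $G_{\mathsf{frontier}}$ be its frontier graph. Then $\langle\mathcal{X},\mathsf{cap}\rangle$ is consistent if and only if some sink node of $G_{\mathsf{frontier}}$ is reachable from the source node.
   Context: Channels and events. Each channel $\mathtt{ch}$ has a capacity $\mathsf{cap}(\mathtt{ch})\in\mathbb{N}$; $\mathtt{ch}$ is synchronous if $\mathsf{cap}(\mathtt{ch})=0$ and asynchronous otherwise. An event is a tuple $e=\langle id,\tau,\mathsf{op}(\mathtt{ch},\mathsf{val})\rangle$ with a unique identifier $id$, a thread $\tau$, an operation $\mathsf{op}\in\{\mathtt{snd},\mathtt{rcv}\}$, a channel $\mathtt{ch}$ and a value $\mathsf{val}$. An execution is a finite sequence $\sigma$ of distinct events. $\sigma$ is well-formed (w.r.t. $\mathsf{cap}$) if: (i) for every asynchronous $\mathtt{ch}$ and every prefix $\pi$ of $\sigma$, $R_\pi(\mathtt{ch})\le S_\pi(\mathtt{ch})\le R_\pi(\mathtt{ch})+\mathsf{cap}(\mathtt{ch})$, where $S_\pi(\mathtt{ch})$, $R_\pi(\mathtt{ch})$ are the numbers of send, resp. receive, events on $\mathtt{ch}$ in $\pi$; (ii) for every synchronous $\mathtt{ch}$, every send on $\mathtt{ch}$ is immediately followed in $\sigma$ by a receive on $\mathtt{ch}$ of a different thread, and every receive on $\mathtt{ch}$ is immediately preceded in $\sigma$ by a send on $\mathtt{ch}$ of a different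 thread; (iii) for every channel $\mathtt{ch}$ and every $i$, if $\sigma$ contains an $i$-th receive on $\mathtt{ch}$, then the $i$-th send on $\mathtt{ch}$ has the same value as it. The program order $\mathsf{po}_\sigma$ is the set of pairs $(e,f)$ with $e$ before $f$ in $\sigma$ and in the same thread. An abstract execution is $\mathcal{X}=\langle \mathsf{S},\mathsf{po}\rangle$ where $\mathsf{S}$ is a finite set of events and $\mathsf{po}$ is a strict order that totally orders the events of each thread and relates no events of different threads. Given a capacity function $\mathsf{cap}$ on the channels occurring in $\mathsf{S}$, an execution $\sigma$ concretizes $\langle\mathcal{X},\mathsf{cap}\rangle$ if its set of events is $\mathsf{S}$, $\mathsf{po}_\sigma=\mathsf{po}$ and $\sigma$ is well-formed; $\langle\mathcal{X},\mathsf{cap}\rangle$ is consistent if it has a concretization. Frontier graph. For $Y\subseteq\mathsf{S}$ let $\#^{Y}_{\mathtt{snd}}(\mathtt{ch})$, $\#^{Y}_{\mathtt{rcv}}(\mathtt{ch})$ be the numbers of send, resp. receive, events on $\mathtt{ch}$ in $Y$. The nodes of $G_{\mathsf{frontier}}$ are triples $\langle Y,Q,I\rangle$ such that: (1) $Y\subseteq\mathsf{S}$ is downward closed under $\mathsf{po}$; for all synchronous channels $\mathtt{ch}$, $\#^{Y}_{\mathtt{rcv}}(\mathtt{ch})=\#^{Y}_{\mathtt{snd}}(\mathtt{ch})$ except for at most one synchronous channel, for which $\#^{Y}_{\mathtt{rcv}}(\mathtt{ch})=\#^{Y}_{\mathtt{snd}}(\mathtt{ch})-1$; and for every asynchronous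 $\mathtt{ch}$, $\#^{Y}_{\mathtt{rcv}}(\mathtt{ch})\le\#^{Y}_{\mathtt{snd}}(\mathtt{ch})\le\#^{Y}_{\mathtt{rcv}}(\mathtt{ch})+\mathsf{cap}(\mathtt{ch})$; (2) $Q$ maps each asynchronous channel $\mathtt{ch}$ to a sequence of events of $Y$ of length at most $\mathsf{cap}(\mathtt{ch})$, such that each event $e$ occurring in $Q(\mathtt{ch})$ is one of the last $|Q(\mathtt{ch})|$ send events on $\mathtt{ch}$ of the thread of $e$; (3) $I$ is $\bot$ if all synchronous channels satisfy $\#^{Y}_{\mathtt{rcv}}=\#^{Y}_{\mathtt{snd}}$, and otherwise $I$ is a send event on the (unique) synchronous channel $\mathtt{ch}$ with $\#^{Y}_{\mathtt{rcv}}(\mathtt{ch})=\#^{Y}_{\mathtt{snd}}(\mathtt{ch})-1$. The source node is $\langle\emptyset,\lambda\mathtt{ch}.\epsilon,\bot\rangle$; the sink nodes are all nodes of the form $\langle\mathsf{S},Q,\bot\rangle$. There is an edge $\langle Y_1,Q_1,I_1\rangle\to\langle Y_2,Q_2,I_2\rangle$ iff there is $e\in\mathsf{S}\setminus Y_1$ with $Y_2=Y_1\cup\{e\}$, and, letting $\mathtt{ch}$ be the channel of $e$: (a) if $\mathtt{ch}$ is asynchronous and $e$ is a receive: $I_1=I_2=\bot$, $Q_1(\mathtt{ch})$ is nonempty, its first event has the same value as $e$, $Q_1(\mathtt{ch})=f\cdot Q_2(\mathtt{ch})$ for that first event $f$, and $Q_2(\mathtt{ch}')=Q_1(\mathtt{ch}')$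 for all other asynchronous $\mathtt{ch}'$; (b) if $\mathtt{ch}$ is asynchronous and $e$ is a send: $I_1=I_2=\bot$, $|Q_1(\mathtt{ch})|<\mathsf{cap}(\mathtt{ch})$, $Q_2(\mathtt{ch})=Q_1(\mathtt{ch})\cdot e$, and $Q_2(\mathtt{ch}')=Q_1(\mathtt{ch}')$ for all other asynchronous $\mathtt{ch}'$; (c) if $\mathtt{ch}$ is synchronous and $e$ is a send: $I_1=\bot$, $I_2=e$, and $Q_1=Q_2$; (d) if $\mathtt{ch}$ is synchronous and $e$ is a receive: $I_1=e'\neq\bot$ where $e'$ is a send on $\mathtt{ch}$ with the same value as $e$ and a thread different from that of $e$, $I_2=\bot$, and $Q_1=Q_2$. *)

From HB Require Import structures.
From mathcomp Require Import all_boot.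
Set Implicit Arguments. Unset Strict Implicit. Unset Printing Implicit Defensive.

Inductive op := Snd | Rcv.
Definition op_eqb (a b : op) : bool :=
  match a, b with Snd, Snd | Rcv, Rcv => true | _, _ => false end.
Lemma op_eqP : Equality.axiom op_eqb.
Proof. by case; case; constructor. Qed.
HB.instance Definition _ := hasDecEq.Build op op_eqP.

Record event (Th Ch V : Type) := Event {
  ev_id : nat; ev_thr : Th; ev_op : op; ev_ch : Ch; ev_val : V }.

Section EventEq.
Variables Th Ch V : eqType.
Definition ev_enc (e : event Th Ch V) :=
  (ev_id e, ev_thr e, ev_op e, ev_ch e, ev_val e).
Definition ev_dec (t : nat * Th * op * Ch * V) : event Th Ch V :=
  let: (i, t, o, c, v) := t in Event i t o c v.
Lemma ev_encK : cancel ev_enc ev_dec. Proof. by case. Qed.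
HB.instance Definition _ := Equality.copy (event Th Ch V) (can_type ev_encK).
End EventEq.

Section VCh.
Variables Th Ch V : eqType.
Notation event := (event Th Ch V).
Implicit Types (e f : event) (c : Ch) (cap : Ch -> nat) (po : rel event)
  (S s : seq event).

Definition is_snd_on c e : bool := (ev_op e == Snd) && (ev_ch e == c).
Definition is_rcv_on c e : bool := (ev_op e == Rcv) && (ev_ch e == c).

Definition sync cap c : bool := cap c == 0.
Definition async cap c : bool := 0 < cap c.

Definition wf_async cap s : Prop :=
  forall c, async cap c -> forall k,
    let pi := take k s in
    count (is_rcv_on c) pi <= count (is_snd_on c) pi <= count (is_rcv_on c) pi + cap c.

Definition wf_sync cap s : Prop :=
  forall c, sync cap c ->
  forall s1 e s2, s = s1 ++ e :: s2 ->
    (is_snd_on c e -> exists f s3, s2 = f :: s3 /\ is_rcv_on c f /\ ev_thr f != ev_thr e) /\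
    (is_rcv_on c e -> exists s0 f, s1 = rcons s0 f /\ is_snd_on c f /\ ev_thr f != ev_thr e).

Definition wf_values s : Prop :=
  forall c i er, onth (filter (is_rcv_on c) s) i = Some er ->
    exists es, onth (filter (is_snd_on c) s) i = Some es /\ ev_val es = ev_val er.

Definition well_formed cap s : Prop :=
  uniq s /\ wf_async cap s /\ wf_sync cap s /\ wf_values s.

Definition po_of s e f : bool :=
  [&& e \in s, f \in s, index e s < index f s & ev_thr e == ev_thr f].

Definition abstract_execution S po : Prop :=
  uniq S /\
  uniq (map (@ev_id _ _ _) S) /\
  (forall e f, po e f -> e \in S /\ f \in S) /\
  (forall e, ~~ po e e) /\
  (forall e f g, po e f -> po f g -> po e g) /\
  (forall e f, po e f -> ev_thr e = ev_thr f) /\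
  (forall e f, e \in S -> f \in S -> e != f -> ev_thr e = ev_thr f ->
     po e f \/ po f e).

Definition concretizes S po cap s : Prop :=
  (forall e, (e \in s) = (e \in S)) /\
  (forall e f, po_of s e f = po e f) /\
  well_formed cap s.

Definition consistent S po cap : Prop := exists s, concretizes S po cap s.

Record node := Node {
  nY : pred event;
  nQ : Ch -> seq event;       (* Q, meaningful on asynchronous channels *)
  nI : option event }.        (* I, with None standing for bottom *)

Definition cnt_snd S (Y : pred event) c := count (fun x => Y x && is_snd_on c x) S.
Definition cnt_rcv S (Y : pred event) c := count (fun x => Y x && is_rcv_on c x) S.

Definition is_node S po cap (n : node) : Prop :=
  let Y := nY n in let Q := nQ n in let I := nI n in
  (forall x, Y x -> x \in S) /\
  (forall e f, Y f -> po e f -> Y e) /\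
  (forall c1 c2, sync cap c1 -> sync cap c2 ->
     cnt_rcv S Y c1 <> cnt_snd S Y c1 -> cnt_rcv S Y c2 <> cnt_snd S Y c2 -> c1 = c2) /\
  (forall c, sync cap c ->
     cnt_rcv S Y c = cnt_snd S Y c \/ cnt_rcv S Y c = (cnt_snd S Y c).-1 /\ 0 < cnt_snd S Y c) /\
  (forall c, async cap c ->
     cnt_rcv S Y c <= cnt_snd S Y c <= cnt_rcv S Y c + cap c) /\
  (forall c, sync cap c -> Q c = [::]) /\
  (forall c, async cap c ->
     size (Q c) <= cap c /\
     forall e, e \in Q c ->
       [/\ Y e, is_snd_on c e &
           count (fun x => [&& Y x, is_snd_on c x, ev_thr x == ev_thr e & po e x]) S
             < size (Q c)]) /\
  (match I with
   | None => forall c, sync cap c -> cnt_rcv S Y c = cnt_snd S Y c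
   | Some i => exists c, [/\ sync cap c, cnt_rcv S Y c <> cnt_snd S Y c & is_snd_on c i]
   end).

Definition source : node := Node pred0 (fun _ => [::]) None.

Definition is_sink S (n : node) : Prop :=
  (forall x, nY n x = (x \in S)) /\ nI n = None.

Definition edge S cap (n1 n2 : node) : Prop :=
  exists e, [/\ e \in S, ~~ nY n1 e,
    (forall x, nY n2 x = nY n1 x || (x == e)) &
    let c := ev_ch e in
    let Q1 := nQ n1 in let Q2 := nQ n2 in
    let I1 := nI n1 in let I2 := nI n2 in
    match ev_op e with
    | Rcv =>
      if async cap c then
        [/\ I1 = None, I2 = None,
            (exists f, Q1 c = f :: Q2 c /\ ev_val f = ev_val e) &
            (forall c', async cap c' -> c' != c -> Q2 c' = Q1 c')]
      else
        (exists e', [/\ I1 = Some e', is_snd_on c e', ev_val e' = ev_val e &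
                        ev_thr e' != ev_thr e]) /\
        I2 = None /\ (forall c', Q1 c' = Q2 c')
    | Snd =>
      if async cap c then
        [/\ I1 = None, I2 = None, size (Q1 c) < cap c, Q2 c = rcons (Q1 c) e &
            (forall c', async cap c' -> c' != c -> Q2 c' = Q1 c')]
      else
        [/\ I1 = None, I2 = Some e & (forall c', Q1 c' = Q2 c')]
    end].

Inductive reachable S po cap : node -> Prop :=
| reach_src : is_node S po cap source -> reachable S po cap source
| reach_step n1 n2 : reachable S po cap n1 -> is_node S po cap n2 ->
    edge S cap n1 n2 -> reachable S po cap n2.

End VCh.

(* A node <Y, Q, I> is the state reached after running the events of Y in
   some order: Q ch holds the sends on the asynchronous channel ch not yet
   received, and I a synchronous send still waiting for its receive.
   Soundness: appending the events labelling a path from the source yields an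
   execution whose unmatched sends on each channel are exactly the queue
   contents of the current node; at a sink all events are placed and no
   synchronous send is pending, so this execution concretizes the instance.
   Completeness: the prefixes of a concretization determine nodes (their
   events, unmatched asynchronous sends and pending synchronous send), and
   consecutive prefixes are joined by an edge labelled with the next event. *)

From HB Require Import structures.
From mathcomp Require Import all_boot zify.
Set Implicit Arguments. Unset Strict Implicit. Unset Printing Implicit Defensive.

Section SeqFacts.
Variable T : eqType.
Implicit Types (s p A B : seq T) (x e : T).

Lemma count_restrict (S p : seq T) (Y P : pred T) :
  uniq p -> uniq S -> {subset p <= S} -> (forall x, Y x = (x \in p)) ->
  count (fun x => Y x && P x) S = count P p.
Proof.
move=> up uS sub HY.
have pe : perm_eq p (filter (mem p) S).
  apply: uniq_perm; rewrite ?filter_uniq // => x.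
  by rewrite mem_filter; apply/idP/andP => [xp|[]//]; split=> //; apply: sub.
by rewrite (permP pe) count_filter; apply: eq_count => x /=; rewrite HY andbC.
Qed.

Lemma count_rcons (P : pred T) s x : count P (rcons s x) = count P s + P x.
Proof. by rewrite -cats1 count_cat /= addn0. Qed.

Lemma rcons_eq_cat_cons s x p e q : rcons s x = p ++ e :: q ->
  [/\ q = [::], p = s & e = x] \/ exists q', q = rcons q' x /\ s = p ++ e :: q'.
Proof.
case/lastP: q => [|q' y]; first by rewrite cats1 => /rcons_inj [-> ->]; left.
by rewrite -rcons_cons -rcons_cat => /rcons_inj [-> ->]; right; exists q'.
Qed.

Lemma index_filter_lt (P : pred T) s A B e x :
  uniq s -> filter P s = A ++ e :: B -> x \in A -> index x s < index e s.
Proof.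
elim: s A => [|y s IH] A /=; first by case: A.
case/andP=> ys us.
have yNfilt z : z \in filter P s -> y != z.
  by rewrite mem_filter => /andP[_ zs]; apply: contraNneq ys => ->.
have yNe A' : filter P s = A' ++ e :: B -> y != e.
  by move=> hf; apply: yNfilt; rewrite hf mem_cat mem_head orbT.
case: ifP => Py; last first.
  move=> hf xA; have yx : y != x by apply: yNfilt; rewrite hf mem_cat xA.
  by rewrite (negbTE (yNe _ hf)) (negbTE yx) ltnS (IH A).
case: A => [|a A] //= [ya hf]; rewrite inE (negbTE (yNe _ hf)).
case/orP=> [/eqP ->|xA]; first by rewrite -ya eqxx.
have yx : y != x by apply: yNfilt; rewrite hf mem_cat xA.
by rewrite (negbTE yx) ltnS (IH A).
Qed.

End SeqFacts.

Section EventFacts.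
Variables Th Ch V : eqType.
Local Notation event := (event Th Ch V).
Implicit Types (e f : event) (c : Ch) (cap : Ch -> nat).

Lemma asyncNsync cap c : async cap c = ~~ sync cap c.
Proof. by rewrite /async /sync lt0n. Qed.

Lemma snd_onP c e : reflect (ev_op e = Snd /\ ev_ch e = c) (is_snd_on c e).
Proof. by apply: (iffP andP) => -[/eqP-> /eqP->]. Qed.

Lemma rcv_onP c e : reflect (ev_op e = Rcv /\ ev_ch e = c) (is_rcv_on c e).
Proof. by apply: (iffP andP) => -[/eqP-> /eqP->]. Qed.

Lemma snd_on_ch c e : is_snd_on c e -> ev_ch e = c. Proof. by case/snd_onP. Qed.
Lemma rcv_on_ch c e : is_rcv_on c e -> ev_ch e = c. Proof. by case/rcv_onP. Qed.
Lemma snd_on_op c e : is_snd_on c e -> ev_op e = Snd. Proof. by case/snd_onP. Qed.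
Lemma rcv_on_op c e : is_rcv_on c e -> ev_op e = Rcv. Proof. by case/rcv_onP. Qed.

Lemma snd_on_self e : is_snd_on (ev_ch e) e = (ev_op e == Snd).
Proof. by rewrite /is_snd_on eqxx andbT. Qed.

Lemma rcv_on_self e : is_rcv_on (ev_ch e) e = (ev_op e == Rcv).
Proof. by rewrite /is_rcv_on eqxx andbT. Qed.

Lemma snd_on_other c e : c != ev_ch e -> is_snd_on c e = false.
Proof. by move=> ne; apply: contraNF ne => /snd_on_ch ->. Qed.

Lemma rcv_on_other c e : c != ev_ch e -> is_rcv_on c e = false.
Proof. by move=> ne; apply: contraNF ne => /rcv_on_ch ->. Qed.

(** The sends on [c] in [s] are [M ++ q], where [M] is matched in order and
    with equal values by the receives on [c]: [q] is what is still in transit. *)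
Definition pending_sends (s : seq event) c (q : seq event) : Prop :=
  exists M, [/\ filter (is_snd_on c) s = M ++ q, size M = count (is_rcv_on c) s &
    forall j er, onth (filter (is_rcv_on c) s) j = Some er ->
      exists es, onth M j = Some es /\ ev_val es = ev_val er].

Lemma pending_sends_nil c : pending_sends [::] c [::].
Proof. by exists [::]; split=> // -[]. Qed.

Lemma pending_sends_rcons_other s q c e :
  ~~ is_snd_on c e -> ~~ is_rcv_on c e -> pending_sends s c q ->
  pending_sends (rcons s e) c q.
Proof.
move=> ns nr [M [hq hM hv]]; exists M.
by rewrite !filter_rcons count_rcons (negbTE ns) (negbTE nr) addn0.
Qed.

Lemma pending_sends_rcons_snd s q c e :
  is_snd_on c e -> pending_sends s c q -> pending_sends (rcons s e) c (rcons q e).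
Proof.
move=> hs [M [hq hM hv]]; have nr : is_rcv_on c e = false by rewrite /is_rcv_on (snd_on_op hs).
exists M; split.
- by rewrite filter_rcons hs hq rcons_cat.
- by rewrite hM count_rcons nr addn0.
- by rewrite filter_rcons nr.
Qed.

Lemma pending_sends_rcons_rcv s q c e f :
  is_rcv_on c e -> ev_val f = ev_val e -> pending_sends s c (f :: q) ->
  pending_sends (rcons s e) c q.
Proof.
move=> hr hfe [M [hq hM hv]].
have ns : is_snd_on c e = false by rewrite /is_snd_on (rcv_on_op hr).
exists (rcons M f); split.
- by rewrite filter_rcons ns hq cat_rcons.
- by rewrite size_rcons hM count_rcons hr addn1.
move=> j er; rewrite filter_rcons hr -cats1 onth_cat size_filter -hM -cats1 onth_cat.
case: ltnP => hj; first exact: hv.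
case Ej: (j - size M) => [|k] //=; last by rewrite onth0n.
by move=> [<-]; exists f.
Qed.

Lemma pending_sends_values s c q i er : pending_sends s c q ->
  onth (filter (is_rcv_on c) s) i = Some er ->
  exists es, onth (filter (is_snd_on c) s) i = Some es /\ ev_val es = ev_val er.
Proof.
case=> M [-> _ hv] /hv [es [hes heq]]; exists es; split=> //.
by rewrite onth_cat -onthTE hes.
Qed.

End EventFacts.

Section Labels.
Variables Th Ch V : eqType.
Local Notation event := (event Th Ch V).
Local Notation node := (node Th Ch V).
Variable cap : Ch -> nat.

(** Conditions (a)-(d) of [edge], so that [edgeP] holds by conversion. *)
Definition edge_label (e : event) (n1 n2 : node) : Prop :=
  let c := ev_ch e in
  let Q1 := nQ n1 in let Q2 := nQ n2 in
  let I1 := nI n1 in let I2 := nI n2 in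
  match ev_op e with
  | Rcv =>
    if async cap c then
      [/\ I1 = None, I2 = None,
          (exists f, Q1 c = f :: Q2 c /\ ev_val f = ev_val e) &
          (forall c', async cap c' -> c' != c -> Q2 c' = Q1 c')]
    else
      (exists e', [/\ I1 = Some e', is_snd_on c e', ev_val e' = ev_val e &
                      ev_thr e' != ev_thr e]) /\
      I2 = None /\ (forall c', Q1 c' = Q2 c')
  | Snd =>
    if async cap c then
      [/\ I1 = None, I2 = None, size (Q1 c) < cap c, Q2 c = rcons (Q1 c) e &
          (forall c', async cap c' -> c' != c -> Q2 c' = Q1 c')]
    else
      [/\ I1 = None, I2 = Some e & (forall c', Q1 c' = Q2 c')]
  end.

Lemma edgeP (S : seq event) (n1 n2 : node) : edge S cap n1 n2 <->
  exists e, [/\ e \in S, ~~ nY n1 e, (forall x, nY n2 x = nY n1 x || (x == e)) &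
                 edge_label e n1 n2].
Proof. by []. Qed.

(** What is in transit on [c] at a node; on a synchronous channel this can
    only be the pending send [I]. *)
Definition node_queue (n : node) c : seq event :=
  if async cap c then nQ n c else
  if nI n is Some i then (if is_snd_on c i then [:: i] else [::]) else [::].

Section Label.
Variables (e : event) (n1 n2 : node).
Hypothesis lab : edge_label e n1 n2.

Lemma label_I2 :
  nI n2 = if (ev_op e == Snd) && sync cap (ev_ch e) then Some e else None.
Proof.
move: lab; rewrite /edge_label.
by case: (ev_op e); rewrite asyncNsync; case: (sync cap (ev_ch e)) => /=; case=> // _ [].
Qed.

Lemma label_I1 i : nI n1 = Some i ->
  [/\ ev_op e = Rcv, sync cap (ev_ch e), is_snd_on (ev_ch e) i,
      ev_val i = ev_val e & ev_thr i != ev_thr e].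
Proof.
move=> hi; move: lab; rewrite /edge_label hi.
case: (ev_op e); rewrite asyncNsync; case: (sync cap (ev_ch e)) => //=; case=> //.
by case=> e' [[<-] *].
Qed.

Lemma label_I1_rcv : ev_op e = Rcv -> sync cap (ev_ch e) -> exists i, nI n1 = Some i.
Proof.
by move=> hop hs; move: lab; rewrite /edge_label hop asyncNsync hs /= => -[[i []]]; exists i.
Qed.

Lemma label_queue_other c : c != ev_ch e -> node_queue n2 c = node_queue n1 c.
Proof.
move=> ne; rewrite /node_queue; case: ifP => hc.
  move: lab; rewrite /edge_label.
  case: (ev_op e); case: (async cap (ev_ch e)).
  - by case=> _ _ _ _ ->.
  - by case=> _ _ ->.
  - by case=> _ _ _ ->.
  - by case=> _ [_ ->].
rewrite label_I2; case E1: (nI n1) => [i|].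
  have [-> _ hi _ _] := label_I1 E1.
  by rewrite snd_on_other // (snd_on_ch hi).
by case: ifP => // _; rewrite snd_on_other.
Qed.

Lemma label_queue_snd : ev_op e = Snd ->
  node_queue n2 (ev_ch e) = rcons (node_queue n1 (ev_ch e)) e.
Proof.
move=> hop; rewrite /node_queue.
move: lab; rewrite /edge_label hop; case: ifP => [_ [] //|].
by rewrite label_I2 hop asyncNsync => /negbFE -> [-> _ _] /=; rewrite snd_on_self hop.
Qed.

Lemma label_queue_rcv : ev_op e = Rcv -> exists f,
  node_queue n1 (ev_ch e) = f :: node_queue n2 (ev_ch e) /\ ev_val f = ev_val e.
Proof.
move=> hop; rewrite /node_queue.
move: lab; rewrite /edge_label hop; case: ifP => [_ [] //|_].
by case=> -[i [-> hi hv _]] [-> _]; exists i; rewrite hi.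
Qed.

End Label.
End Labels.

Section Soundness.
Variables Th Ch V : eqType.
Local Notation event := (event Th Ch V).
Local Notation node := (node Th Ch V).
Variables (S : seq event) (po : rel event) (cap : Ch -> nat).
Hypothesis AE : abstract_execution S po.

(** [wf_sync] for a prefix: a synchronous send may still wait for its
    receive, but only if it is the last event and it is the pending send [I]. *)
Definition wf_sync_pending (I : option event) (s : seq event) : Prop :=
  forall c, sync cap c -> forall s1 e s2, s = s1 ++ e :: s2 ->
  (is_snd_on c e -> (s2 = [::] /\ I = Some e) \/
      exists f s3, s2 = f :: s3 /\ is_rcv_on c f /\ ev_thr f != ev_thr e) /\
  (is_rcv_on c e -> exists s0 f, s1 = rcons s0 f /\ is_snd_on c f /\ ev_thr f != ev_thr e).

Definition realizes (n : node) (s : seq event) : Prop :=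
  [/\ uniq s, (forall x, nY n x = (x \in s)),
      (forall e f, e \in s -> f \in s -> po e f -> index e s < index f s),
      wf_async cap s &
      [/\ wf_sync_pending (nI n) s,
          (forall i, nI n = Some i -> exists s0, s = rcons s0 i) &
          (forall c, pending_sends s c (node_queue cap n c))]].

Lemma realizes_source : realizes (source Th Ch V) [::].
Proof.
do 2 split=> //; first by move=> c _ [].
move=> c; rewrite /node_queue /=; case: ifP => _; apply: pending_sends_nil.
Qed.

Section Step.
Variables (n1 n2 : node) (e : event) (s : seq event).
Hypotheses (node1 : is_node S po cap n1) (node2 : is_node S po cap n2).
Hypotheses (eNY1 : ~~ nY n1 e) (Y2 : forall x, nY n2 x = nY n1 x || (x == e)).
Hypothesis lab : edge_label cap e n1 n2.
Hypothesis real1 : realizes n1 s.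

Let Y1 : forall x, nY n1 x = (x \in s). Proof. by case: real1. Qed.

Lemma step_mem x : nY n2 x = (x \in rcons s e).
Proof. by rewrite Y2 Y1 mem_rcons in_cons orbC. Qed.

Lemma step_uniq : uniq (rcons s e).
Proof. by case: real1 => us *; rewrite rcons_uniq -Y1 eNY1. Qed.

Lemma step_po x y : x \in rcons s e -> y \in rcons s e -> po x y ->
  index x (rcons s e) < index y (rcons s e).
Proof.
case: real1 => _ _ hidx _ _; case: node1 => _ [down1 _].
rewrite -!cats1 !index_cat !mem_cat !inE.
case xs: (x \in s); case ys: (y \in s) => //= /eqP hx.
- by move=> _ /hidx; apply.
- by move/eqP=> -> _; rewrite eqxx addn0 index_mem.
- subst x => _ hey; have := down1 e y; rewrite (Y1 y) ys (negbTE eNY1).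
  by move/(_ isT hey).
move=> /eqP hy; subst x y; case: AE => _ [_ [_ [irr _]]].
by rewrite (negbTE (irr e)).
Qed.

Lemma step_wf_async : wf_async cap (rcons s e).
Proof.
case: real1 => _ _ _ was _; case: node2 => sub2 [_ [_ [_ [asy2 _]]]].
move=> c hc k /=; case: (leqP k (size s)) => hk.
  by rewrite -cats1 takel_cat //; apply: was.
rewrite take_oversize ?size_rcons //.
have uS : uniq S by case: AE.
have sub : {subset rcons s e <= S} by move=> x; rewrite -step_mem; apply: sub2.
have := asy2 c hc; rewrite /cnt_rcv /cnt_snd.
by rewrite !(count_restrict _ step_uniq uS sub step_mem).
Qed.

Lemma step_wf_sync_pending : wf_sync_pending (nI n2) (rcons s e).
Proof.
case: real1 => _ _ _ _ [wsp last1 _].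
move=> c hc s1 x s2 /rcons_eq_cat_cons [[-> -> ->]|[s2' [-> hs]]].
  split=> [hsn|hr].
    by left; rewrite (label_I2 lab) (snd_on_op hsn) (snd_on_ch hsn) hc.
  have hce := rcv_on_ch hr; rewrite -hce in hc.
  have [i hi] := label_I1_rcv lab (rcv_on_op hr) hc.
  have [_ _ hsi _ hthr] := label_I1 lab hi; have [s0 ->] := last1 i hi.
  by exists s0, i; rewrite -hce.
have [h1 h2] := wsp c hc s1 x s2' hs; split=> // hsn; right.
case: (h1 hsn) => [[-> hi]|[f [s3 [-> hf]]]]; last by exists f, (rcons s3 e).
have [hop _ hsx _ hthr] := label_I1 lab hi.
exists e, [::]; rewrite eq_sym; split=> //; split=> //.
by apply/rcv_onP; rewrite -(snd_on_ch hsx) (snd_on_ch hsn).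
Qed.

Lemma step_last i : nI n2 = Some i -> exists s0, rcons s e = rcons s0 i.
Proof. by rewrite (label_I2 lab); case: ifP => // _ [<-]; exists s. Qed.

Lemma step_pending_sends c :
  pending_sends (rcons s e) c (node_queue cap n2 c).
Proof.
case: real1 => _ _ _ _ [_ _ pend1].
case: (eqVneq c (ev_ch e)) => [->|ne]; last first.
  rewrite (label_queue_other lab ne).
  by apply: pending_sends_rcons_other; rewrite ?snd_on_other ?rcv_on_other.
case hop: (ev_op e).
  rewrite (label_queue_snd lab hop); apply: pending_sends_rcons_snd => //.
  by rewrite snd_on_self hop.
have [f [hf hv]] := label_queue_rcv lab hop.
apply: (pending_sends_rcons_rcv _ hv); first by rewrite rcv_on_self hop.
by rewrite -hf.
Qed.

Lemma realizes_step : realizes n2 (rcons s e).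
Proof.
split; [exact: step_uniq|exact: step_mem|exact: step_po|exact: step_wf_async|].
by split; [exact: step_wf_sync_pending|exact: step_last|exact: step_pending_sends].
Qed.

End Step.

Lemma reachable_node n : reachable S po cap n -> is_node S po cap n.
Proof. by case. Qed.

Lemma reachable_realized n : reachable S po cap n -> exists s, realizes n s.
Proof.
elim=> [_|n1 n2 r1 [s real1] node2 /edgeP [e [_ eNY1 Y2 lab]]].
  by exists [::]; apply: realizes_source.
by exists (rcons s e); apply: (realizes_step (reachable_node r1)).
Qed.

Lemma sink_realized_concretizes n s :
  is_sink S n -> realizes n s -> concretizes S po cap s.
Proof.
case=> YS In [us Ys hidx was [wsp _ pend]].
case: AE => _ [_ [poS [irr [_ [po_thr po_tot]]]]].
have memS x : (x \in s) = (x \in S) by rewrite -Ys YS.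
split=> //; split.
  move=> e f; rewrite /po_of !memS; apply/idP/idP.
    case/and4P=> eS fS ief /eqP tef.
    have nef : e != f by apply: contraTneq ief => ->; rewrite ltnn.
    case: (po_tot e f eS fS nef tef) => // hfe.
    have := hidx f e; rewrite !memS => /(_ fS eS hfe) hfe'.
    by have := ltn_trans ief hfe'; rewrite ltnn.
  move=> hef; have [eS fS] := poS e f hef.
  by rewrite eS fS /= hidx ?memS //= (po_thr e f hef) eqxx.
split=> //; split=> //; split.
  move=> c hc s1 e s2 hs; have [h1 h2] := wsp c hc s1 e s2 hs; split=> // hsn.
  by case: (h1 hsn) => // -[_]; rewrite In.
by move=> c i er; apply: pending_sends_values (pend c).
Qed.

End Soundness.

Section Completeness.
Variables Th Ch V : eqType.
Local Notation event := (event Th Ch V).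
Local Notation node := (node Th Ch V).
Variables (S : seq event) (po : rel event) (cap : Ch -> nat) (s : seq event).
Hypothesis AE : abstract_execution S po.
Hypotheses (memS : forall e, (e \in s) = (e \in S)) (poS : forall e f, po_of s e f = po e f).
Hypotheses (us : uniq s) (was : wf_async cap s) (wss : wf_sync cap s) (wvs : wf_values s).
Implicit Types (p q : seq event) (x e f : event) (c : Ch).

Definition prefix_pending p : option event :=
  if rev p is x :: _ then
    (if (ev_op x == Snd) && sync cap (ev_ch x) then Some x else None)
  else None.

Definition prefix_buffer p c : seq event :=
  if async cap c then drop (count (is_rcv_on c) p) (filter (is_snd_on c) p) else [::].

Definition represents (n : node) p : Prop :=
  [/\ forall x, nY n x = (x \in p), forall c, nQ n c = prefix_buffer p c &
      nI n = prefix_pending p].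

Definition prefix_node p : node :=
  Node (fun x => x \in p) (prefix_buffer p) (prefix_pending p).

Lemma prefix_pending_rcons p x : prefix_pending (rcons p x) =
  if (ev_op x == Snd) && sync cap (ev_ch x) then Some x else None.
Proof. by rewrite /prefix_pending rev_rcons. Qed.

Lemma prefix_pendingP p i : prefix_pending p = Some i ->
  exists p0, [/\ p = rcons p0 i, ev_op i = Snd & sync cap (ev_ch i)].
Proof.
case/lastP: p => [|p0 x] //; rewrite prefix_pending_rcons.
by case: ifP => // /andP[/eqP h1 h2] [<-]; exists p0.
Qed.

Lemma prefix_uniq p q : s = p ++ q -> uniq p.
Proof. by move=> hs; move: us; rewrite hs cat_uniq => /andP[]. Qed.

Lemma prefix_sub p q : s = p ++ q -> {subset p <= S}.
Proof. by move=> hs x xp; rewrite -memS hs mem_cat xp. Qed.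

Lemma prefix_async_bounds p q c : s = p ++ q -> async cap c ->
  count (is_rcv_on c) p <= count (is_snd_on c) p <= count (is_rcv_on c) p + cap c.
Proof. by move=> hs hc; have := was hc (size p); rewrite /= hs take_size_cat. Qed.

Lemma pending_received p x q i : s = p ++ x :: q -> prefix_pending p = Some i ->
  is_rcv_on (ev_ch i) x /\ ev_thr x != ev_thr i.
Proof.
move=> hs /prefix_pendingP [p0 [hp hop hsy]].
have hs' : s = p0 ++ i :: x :: q by rewrite hs hp cat_rcons.
have [+ _] := wss hsy hs'; rewrite snd_on_self hop => /(_ isT).
by case=> f [_ [[<- _] []]].
Qed.

Lemma rcv_sync_after_pending p x q c : s = p ++ x :: q -> sync cap c -> is_rcv_on c x ->
  exists2 i, prefix_pending p = Some i & is_snd_on c i.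
Proof.
move=> hs hc hr; have [_ /(_ hr) [p0 [f [hp [hf _]]]]] := wss hc hs.
by exists f => //; rewrite hp prefix_pending_rcons (snd_on_op hf) (snd_on_ch hf) hc.
Qed.

Lemma count_sync_prefix p q c : s = p ++ q -> sync cap c ->
  count (is_snd_on c) p =
  count (is_rcv_on c) p + (if prefix_pending p is Some i then is_snd_on c i else false).
Proof.
elim/last_ind: p q => [//|p x IH] q hs hc.
have hs' : s = p ++ x :: q by rewrite hs cat_rcons.
rewrite !count_rcons prefix_pending_rcons (IH _ hs' hc).
case E1: (prefix_pending p) => [i|].
  have [hr _] := pending_received hs' E1; have [_ [_ iop _]] := prefix_pendingP E1.
  by rewrite /is_snd_on /is_rcv_on (rcv_on_op hr) (rcv_on_ch hr) iop /= !addn0.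
case: (eqVneq (ev_ch x) c) => [xc|xc].
  case hop: (ev_op x).
    have rx : is_rcv_on c x = false by rewrite /is_rcv_on hop.
    have sx : is_snd_on c x by apply/snd_onP.
    by rewrite xc hc rx sx /= sx.
  have hr : is_rcv_on c x by apply/rcv_onP.
  by have [i] := rcv_sync_after_pending hs' hc hr; rewrite E1.
rewrite eq_sym in xc; rewrite snd_on_other ?rcv_on_other //.
by case: ifP => _ //=; rewrite snd_on_other.
Qed.

Lemma index_prefix p q x : s = p ++ q -> x \in p -> index x s = index x p.
Proof. by move=> -> xp; rewrite index_cat xp. Qed.

(** Sends on [c] that are po-after a buffered send [e] come after [e] in
    [s], so they all lie in the buffer, behind [e]. *)
Lemma buffer_po_count p q c e : s = p ++ q -> e \in prefix_buffer p c ->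
  count (fun x => [&& x \in p, is_snd_on c x, ev_thr x == ev_thr e & po e x]) S
  < size (prefix_buffer p c).
Proof.
move=> hs; rewrite /prefix_buffer; case: ifP => // _ he.
have up := prefix_uniq hs; have uS : uniq S by case: AE.
set L := filter (is_snd_on c) p; set r := count (is_rcv_on c) p.
apply: (@leq_ltn_trans (count (po e) L)).
  apply: (@leq_trans (count (fun x => (x \in p) && (is_snd_on c x && po e x)) S)).
    by apply: sub_count => x /and4P[-> -> _ ->].
  rewrite (count_restrict _ up uS (prefix_sub hs)) // count_filter.
  by apply: eq_leq; apply: eq_count => x /=; rewrite andbC.
case/splitPr: he (cat_take_drop r L) => B1 B2 hL.
have {}hL : L = (take r L ++ B1) ++ e :: B2 by rewrite -catA hL.
have inL x : x \in L -> x \in p by rewrite mem_filter => /andP[].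
have ep : e \in p by apply: inL; rewrite hL mem_cat mem_head orbT.
rewrite {1}hL count_cat /=.
have -> : count (po e) (take r L ++ B1) = 0.
  rewrite (@eq_in_count _ _ pred0) ?count_pred0 // => x xA /=.
  apply/negbTE/negP => hex.
  have xp : x \in p by apply: inL; rewrite hL mem_cat xA.
  move: hex; rewrite -poS => /and4P[_ _ hlt _].
  rewrite (index_prefix hs xp) (index_prefix hs ep) in hlt.
  by have := ltn_trans (index_filter_lt up hL xA) hlt; rewrite ltnn.
have -> : po e e = false by case: AE => _ [_ [_ [irr _]]]; apply/negbTE.
by rewrite size_cat /= add0n addnS ltnS (leq_trans (count_size _ _)) ?leq_addl.
Qed.

Lemma prefix_buffer_spec p q c : s = p ++ q -> async cap c ->
  size (prefix_buffer p c) <= cap c /\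
  forall e, e \in prefix_buffer p c ->
    [/\ e \in p, is_snd_on c e &
        count (fun x => [&& x \in p, is_snd_on c x, ev_thr x == ev_thr e & po e x]) S
          < size (prefix_buffer p c)].
Proof.
move=> hs hc; split.
  rewrite /prefix_buffer hc size_drop size_filter.
  by have := prefix_async_bounds hs hc; lia.
move=> e he; split; last exact: buffer_po_count hs he.
- by move: he; rewrite /prefix_buffer hc => /mem_drop; rewrite mem_filter => /andP[].
- by move: he; rewrite /prefix_buffer hc => /mem_drop; rewrite mem_filter => /andP[].
Qed.

Lemma represents_node n p q : s = p ++ q -> represents n p -> is_node S po cap n.
Proof.
move=> hs [hY hQ hI].
have uS : uniq S by case: AE.
have cnt P : count (fun x => nY n x && P x) S = count P p.
  exact: count_restrict (prefix_uniq hs) uS (prefix_sub hs) hY.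
have cS c : cnt_snd S (nY n) c = count (is_snd_on c) p by apply: cnt.
have cR c : cnt_rcv S (nY n) c = count (is_rcv_on c) p by apply: cnt.
have Fsync := count_sync_prefix hs.
split.
  by move=> x; rewrite hY => /(prefix_sub hs).
split.
  move=> e f; rewrite !hY => fp hef.
  have := poS e f; rewrite hef => /and4P[es fs hlt _].
  have tk : take (size p) s = p by rewrite hs take_size_cat.
  rewrite -tk in_take //; rewrite -tk in_take // in fp.
  exact: ltn_trans hlt fp.
split.
  move=> c1 c2 h1 h2; rewrite !cS !cR (Fsync _ h1) (Fsync _ h2).
  case: (prefix_pending p) => [i|]; last by rewrite !addn0.
  case i1: (is_snd_on c1 i); last by rewrite addn0.
  case i2: (is_snd_on c2 i); last by rewrite addn0.
  by rewrite -(snd_on_ch i1) -(snd_on_ch i2).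
split.
  move=> c hc; rewrite cS cR (Fsync _ hc).
  case: (prefix_pending p) => [i|]; last by left; rewrite addn0.
  by case: (is_snd_on c i); [right; rewrite addn1|left; rewrite addn0].
split; first by move=> c hc; rewrite cS cR; apply: prefix_async_bounds hs hc.
split; first by move=> c hc; rewrite hQ /prefix_buffer asyncNsync hc.
split.
  move=> c hc; rewrite hQ; have [-> hbuf] := prefix_buffer_spec hs hc.
  split=> // e /hbuf [ep snd_e cnt_lt]; split; rewrite ?hY //.
  by under eq_count do rewrite hY.
rewrite hI; case E1: (prefix_pending p) => [i|].
  have [_ [_ iop isy]] := prefix_pendingP E1.
  have si : is_snd_on (ev_ch i) i by rewrite snd_on_self iop.
  exists (ev_ch i); rewrite cS cR (Fsync _ isy) E1 si; split=> //; lia.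
by move=> c hc; rewrite cS cR (Fsync _ hc) E1 addn0.
Qed.

Section PrefixStep.
Variables (p : seq event) (x : event) (q : seq event).
Hypothesis hs : s = p ++ x :: q.

Let hs' : s = rcons p x ++ q. Proof. by rewrite cat_rcons. Qed.

Lemma prefix_pending_None : ev_op x = Snd \/ async cap (ev_ch x) -> prefix_pending p = None.
Proof.
case E1: (prefix_pending p) => [i|] // hx.
have [hr _] := pending_received hs E1; have [_ [_ _ hsy]] := prefix_pendingP E1.
by case: hx; rewrite ?(rcv_on_op hr) // asyncNsync (rcv_on_ch hr) hsy.
Qed.

Lemma prefix_buffer_rcons_other c : c != ev_ch x ->
  prefix_buffer (rcons p x) c = prefix_buffer p c.
Proof.
by move=> ne; rewrite /prefix_buffer filter_rcons snd_on_other // count_rcons rcv_on_other // addn0.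
Qed.

Lemma prefix_buffer_rcons_snd : ev_op x = Snd -> async cap (ev_ch x) ->
  size (prefix_buffer p (ev_ch x)) < cap (ev_ch x) /\
  prefix_buffer (rcons p x) (ev_ch x) = rcons (prefix_buffer p (ev_ch x)) x.
Proof.
move=> hop hac.
have sx : is_snd_on (ev_ch x) x by rewrite snd_on_self hop.
have rx : is_rcv_on (ev_ch x) x = false by rewrite rcv_on_self hop.
have := prefix_async_bounds hs' hac; have := prefix_async_bounds hs hac.
rewrite /prefix_buffer hac size_drop size_filter filter_rcons sx !count_rcons sx rx addn0.
rewrite addn1 => /andP[rs _] /andP[_ sr]; split; first by rewrite ltn_subLR.
by rewrite drop_rcons // size_filter.
Qed.

Lemma prefix_buffer_rcons_rcv : ev_op x = Rcv -> async cap (ev_ch x) -> exists f,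
  prefix_buffer p (ev_ch x) = f :: prefix_buffer (rcons p x) (ev_ch x) /\ ev_val f = ev_val x.
Proof.
move=> hop hac; set c := ev_ch x.
have rx : is_rcv_on c x by rewrite /c rcv_on_self hop.
have sx : is_snd_on c x = false by rewrite /c snd_on_self hop.
set r := count (is_rcv_on c) p; set L := filter (is_snd_on c) p.
have rL : r < size L.
  have := prefix_async_bounds hs' hac; rewrite !count_rcons sx rx addn0 addn1.
  by rewrite /L size_filter => /andP[].
exists (nth x L r); split.
  by rewrite /prefix_buffer hac (drop_nth x rL) filter_rcons sx count_rcons rx addn1.
have hr : onth (filter (is_rcv_on c) s) r = Some x.
  by rewrite hs filter_cat /= rx onth_cat size_filter ltnn subnn.
have [es [+ <-]] := wvs hr; rewrite hs filter_cat onth_cat -/L rL.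
by move/(onth_nth x) => ->.
Qed.

Lemma prefix_pending_rcv : ev_op x = Rcv -> sync cap (ev_ch x) -> exists f,
  [/\ prefix_pending p = Some f, is_snd_on (ev_ch x) f, ev_val f = ev_val x &
      ev_thr f != ev_thr x].
Proof.
move=> hop hsx; set c := ev_ch x.
have rx : is_rcv_on c x by rewrite /c rcv_on_self hop.
have [_ /(_ rx) [p0 [f [hp [sf thr]]]]] := wss hsx hs.
have pf : prefix_pending p = Some f.
  by rewrite hp prefix_pending_rcons (snd_on_op sf) (snd_on_ch sf) hsx.
exists f; split=> //.
have cnt : count (is_snd_on c) p0 = count (is_rcv_on c) p.
  have := count_sync_prefix hs hsx; rewrite pf sf {1}hp count_rcons sf !addn1.
  by case.
have hr : onth (filter (is_rcv_on c) s) (count (is_rcv_on c) p) = Some x.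
  by rewrite hs filter_cat /= rx onth_cat size_filter ltnn subnn.
have [es [+ <-]] := wvs hr; rewrite -cnt hs hp cat_rcons filter_cat /= sf.
by rewrite onth_cat size_filter ltnn subnn => -[->].
Qed.

Lemma represents_edge n1 : represents n1 p ->
  edge S cap n1 (prefix_node (rcons p x)).
Proof.
case=> Y1 Q1 I1; apply/edgeP; exists x; split.
- by rewrite -memS hs mem_cat mem_head orbT.
- by rewrite Y1; move: us; rewrite hs cat_uniq => /and3P[_ /hasPn/(_ x (mem_head _ _))].
- by move=> y; rewrite /= mem_rcons in_cons Y1 orbC.
have Q_sync : sync cap (ev_ch x) -> forall c, nQ n1 c = prefix_buffer (rcons p x) c.
  move=> hsx c; rewrite Q1; case: (eqVneq c (ev_ch x)) => [->|ne].
    by rewrite /prefix_buffer asyncNsync hsx.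
  by rewrite prefix_buffer_rcons_other.
have Q_other c : async cap c -> c != ev_ch x -> prefix_buffer (rcons p x) c = nQ n1 c.
  by move=> _ ne; rewrite Q1 prefix_buffer_rcons_other.
rewrite /edge_label /= prefix_pending_rcons I1 Q1.
case hop: (ev_op x); rewrite asyncNsync; case hsx: (sync cap (ev_ch x)) => /=.
- by rewrite prefix_pending_None ?hop; [split=> //; apply: Q_sync|left].
- have hac : async cap (ev_ch x) by rewrite asyncNsync hsx.
  have [room ->] := prefix_buffer_rcons_snd hop hac.
  by rewrite prefix_pending_None //; right.
- have [f [pf sf vf tf]] := prefix_pending_rcv hop hsx.
  by split; [exists f|split=> //; apply: Q_sync].
- have hac : async cap (ev_ch x) by rewrite asyncNsync hsx.
  rewrite prefix_pending_None; last by right.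
  by split=> //; apply: prefix_buffer_rcons_rcv.
Qed.

End PrefixStep.

Lemma prefix_reachable p q : s = p ++ q ->
  exists n, represents n p /\ reachable S po cap n.
Proof.
elim/last_ind: p q => [|p x IH] q hs.
  have rep : represents (source Th Ch V) [::].
    by split=> // c; rewrite /prefix_buffer; case: ifP.
  by exists (source Th Ch V); split; last apply/reach_src/(represents_node hs).
have hs' : s = p ++ x :: q by rewrite hs cat_rcons.
have [n1 [rep1 reach1]] := IH _ hs'.
exists (prefix_node (rcons p x)); split=> //.
apply: reach_step reach1 _ (represents_edge hs' rep1).
by apply: (represents_node hs).
Qed.

Lemma concretization_reaches_sink : exists n, is_sink S n /\ reachable S po cap n.
Proof.
have [n [[Yn _ In] reach]] := prefix_reachable (esym (cats0 s)).
exists n; split=> //; split; first by move=> x; rewrite Yn memS.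
rewrite In; case E1: (prefix_pending s) => [i|] //.
have [s0 [hs hop hsy]] := prefix_pendingP E1.
have hs' : s = s0 ++ [:: i] by rewrite hs cats1.
have [+ _] := wss hsy hs'.
by rewrite snd_on_self hop => /(_ isT) [f [s3 []]].
Qed.

End Completeness.

Theorem mainTheorem9 (Th Ch V : eqType) (S : seq (event Th Ch V))
  (po : rel (event Th Ch V)) (cap : Ch -> nat) :
  abstract_execution S po ->
  (consistent S po cap <->
   exists n : node Th Ch V, is_sink S n /\ reachable S po cap n).
Proof.
move=> AE; split.
  case=> s [memS [poS [us [was [wss wvs]]]]].
  exact: concretization_reaches_sink AE memS poS us was wss wvs.
case=> n [sink /(reachable_realized AE) [s real]].
by exists s; apply: sink_realized_concretizes real.
Qed.
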